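(* Let $(G,\sigma)$ be a finite connected signed graph satisfying $CD_{p}^{\sigma}(K,N)$ with $p\geq2$, $N>1$ and $K>0$. Then the first (smallest) nonzero eigenvalue $\lambda_p^\sigma$ of $\Delta_p^\sigma$ satisfies \[ \lambda_{p}^{\sigma}\geq\left(\frac{1}{\mathrm{vol}(G)}\right)^{\frac{p-2}{2}}\left(\frac{NK}{N-1}\right)^{\frac{p}{2}}, \] where $\mathrm{vol}(G)=\sum_{x\in V}d_x$.
   Context: $G=(V,E)$ is a finite simple connected graph with degrees $d_x$; $\sigma:E\to\{\pm1\}$, $\sigma_{xy}=\sigma(\{x,y\})$. For $p>1$: $\Delta_{p}^{\sigma}f(x)=\frac{1}{d_{x}}\sum_{y\sim x}|\sigma_{xy}f(y)-f(x)|^{p-2}(\sigma_{xy}f(y)-f(x))$ (with $|t|^{p-2}t=0$ at $t=0$); eigenvalue $\lambda$: $-\Delta_{p}^{\sigma}f=\lambda|f|^{p-2}f$ for some nonzero $f$. $\Gamma_p^\sigma(f,g)(x)=\frac{1}{2d_{x}}\sum_{y\sim x}|\sigma_{xy}f(y)-f(x)|^{p-2}(\sigma_{xy}f(y)-f(x))(\sigma_{xy}g(y)-g(x))$; $\mathscr{L}^\sigma_{p,f}\varphi(x)=\frac{1}{d_{x}}\sum_{y\sim x}|\sigma_{xy}f(y)-f(x)|^{p-2}(\varphi(y)-\varphi(x))$; $\Gamma_{p,2}^\sigma(f,f)(x)=\frac12\mathscr{L}_{p,f}^\sigma(\Gamma^\sigma_p(f,f))(x)-\Gamma_p^\sigma(f,\Delta_p^\sigma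 f)(x)$. $(G,\sigma)$ satisfies $CD_p^\sigma(K,N)$ if at every $x\in V$, $\Gamma_{p,2}^{\sigma}(f,f)(x)\geq\frac{1}{N}(\Delta_{p}^{\sigma}f(x))^{2}+K(\Gamma^{\sigma}_{p}(f,f)(x))^{\frac{2p-2}{p}}$ for every $f:V\to\mathbb{R}$ with $\sigma_{xy}f(y)-f(x)\neq0$ for every $y\sim x$ ($\frac1N=0$ if $N=\infty$). *)

From HB Require Import structures.
From mathcomp Require Import all_boot all_order all_algebra.
From mathcomp Require Import reals exp.
Set Implicit Arguments. Unset Strict Implicit. Unset Printing Implicit Defensive.
Import Order.TTheory GRing.Theory Num.Theory.
Local Open Scope ring_scope.

Section SignedGraph.
Variables (R : realType) (V : finType) (adj : rel V) (sigma : V -> V -> R).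

Definition simple_connected_graph : Prop :=
  symmetric adj /\ irreflexive adj /\ (forall x y, connect adj x y).

Definition signature : Prop :=
  forall x y, adj x y -> sigma x y = sigma y x /\ (sigma x y = 1 \/ sigma x y = -1).

Definition deg (x : V) : R := #|[set y | adj x y]|%:R.

Definition vol : R := \sum_(x : V) deg x.

Definition sdiff (f : V -> R) (x y : V) : R := sigma x y * f y - f x.

Definition ppow (p t : R) : R := if t == 0 then 0 else `|t| `^ (p - 2) * t.

Definition plap (p : R) (f : V -> R) (x : V) : R :=
  (deg x)^-1 * \sum_(y | adj x y) ppow p (sdiff f x y).

Definition Gam (p : R) (f g : V -> R) (x : V) : R :=
  (2 * deg x)^-1 * \sum_(y | adj x y) ppow p (sdiff f x y) * sdiff g x y.

Definition Lpf (p : R) (f phi : V -> R) (x : V) : R :=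
  (deg x)^-1 * \sum_(y | adj x y) `|sdiff f x y| `^ (p - 2) * (phi y - phi x).

Definition Gam2 (p : R) (f : V -> R) (x : V) : R :=
  2^-1 * Lpf p f (Gam p f f) x - Gam p f (plap p f) x.

Definition CDp (p K N : R) : Prop :=
  forall (x : V) (f : V -> R), (forall y, adj x y -> sdiff f x y != 0) ->
    Gam2 p f x >= N^-1 * (plap p f x) ^+ 2
                  + K * (Gam p f f x) `^ ((2 * p - 2) / p).

Definition is_eigenvalue (p lam : R) : Prop :=
  exists f : V -> R, (exists x, f x != 0) /\
    forall x, - plap p f x = lam * ppow p (f x).

End SignedGraph.

(* Multiply the CD_p(K,N) inequality at x by d_x and sum over V.  For an eigenfunction f
   with eigenvalue lam, summation by parts gives  sum d Gam2(f) = sum d (Delta f)^2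
   = lam^2 sum d |f|^(2p-2)  and  sum d Gam(f) = lam S  with  S = sum d |f|^p,  so that
     K sum d Gam(f)^((2p-2)/p) <= (1 - 1/N) lam^2 sum d |f|^(2p-2).
   Jensen's inequality for t |-> t^((2p-2)/p), with weights d, bounds the left-hand side
   below by K vol (lam S / vol)^((2p-2)/p); as the degrees are integers,
   sum d |f|^(2p-2) <= S^((2p-2)/p).  Comparing the two bounds and solving for lam gives
   the theorem.  CD_p is only assumed for functions whose differences at x do not vanish;
   it extends to all functions by perturbing f(x) and letting the perturbation go to 0. *)

From HB Require Import structures.
From mathcomp Require Import all_boot all_order all_algebra.
From mathcomp Require Import boolp reals topology normedtype derive exp.
From mathcomp Require Import ring lra.
Set Implicit Arguments.
Unset Strict Implicit.
Unset Printing Implicit Defensive.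

Import Order.TTheory GRing.Theory Num.Theory.
Import numFieldNormedType.Exports.

Local Open Scope ring_scope.

Local Notation cont0 g := (continuous_at 0 g).

Section RealInequalities.
Variable R : realType.

Lemma powR_tangent_le (a m q : R) : 1 <= q -> 0 <= a -> 0 <= m ->
  q * (a * m `^ (q - 1)) <= a `^ q + (q - 1) * m `^ q.
Proof.
rewrite le_eqVlt => /predU1P[<- a0 _|q1 a0 m0].
  by rewrite subrr powRr0 powRr1 // mul1r mulr1 mul0r addr0.
have q0 : 0 < q by apply: lt_trans q1.
have q1_gt0 : 0 < q - 1 by rewrite subr_gt0.
have conj : q^-1 + (q / (q - 1))^-1 = 1 by rewrite invf_div; field; rewrite !gt_eqF.
have := conjugate_powR a0 (powR_ge0 m (q - 1)) q0 (divr_gt0 q0 q1_gt0) conj.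
rewrite -powRrM (_ : (q - 1) * (q / (q - 1)) = q); last by field; rewrite gt_eqF.
move=> young.
have -> : a `^ q + (q - 1) * m `^ q = q * (a `^ q / q + m `^ q / (q / (q - 1))).
  by field; rewrite !gt_eqF.
by rewrite ler_pM2l.
Qed.

Lemma powR_mean_le (I : finType) (w g : I -> R) (q : R) : 1 <= q ->
  (forall i, 0 <= w i) -> (forall i, 0 <= g i) -> 0 < \sum_i w i ->
  (\sum_i w i) * ((\sum_i w i * g i) / \sum_i w i) `^ q <= \sum_i w i * g i `^ q.
Proof.
move=> q1 w0 g0 W0; set W := \sum_i w i; set m := (\sum_i _) / W.
have m0 : 0 <= m.
  by rewrite divr_ge0 ?(ltW W0) //; apply: sumr_ge0 => i _; rewrite mulr_ge0.
have mean : \sum_i w i * g i = W * m by rewrite mulrC divfK ?gt_eqF.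
have tangent : \sum_i w i * (q * (g i * m `^ (q - 1)))
    <= \sum_i w i * (g i `^ q + (q - 1) * m `^ q).
  by apply: ler_sum => i _; rewrite ler_wpM2l ?powR_tangent_le.
have lhsE : \sum_i w i * (q * (g i * m `^ (q - 1))) = q * (W * m `^ q).
  rewrite -(mulr_powRB1 m0 (lt_le_trans ltr01 q1)) [W * _]mulrA -mean mulr_suml mulr_sumr.
  by apply: eq_bigr => i _; ring.
have rhsE : \sum_i w i * (g i `^ q + (q - 1) * m `^ q)
    = \sum_i w i * g i `^ q + (q - 1) * (W * m `^ q).
  by rewrite /W mulr_suml mulr_sumr -big_split; apply: eq_bigr => i _ /=; ring.
rewrite lhsE rhsE in tangent; lra.
Qed.

(* The weights must be integers: a nonzero weight is at least 1. *)
Lemma sum_powR_le_powR_sum (I : finType) (w : I -> nat) (a : I -> R) (r : R) :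
  0 <= r -> (forall i, 0 <= a i) ->
  \sum_i (w i)%:R * (a i * a i `^ r)
    <= (\sum_i (w i)%:R * a i) * (\sum_i (w i)%:R * a i) `^ r.
Proof.
move=> r0 a0; rewrite mulr_suml; apply: ler_sum => i _; rewrite mulrA.
have [->|wi0] := eqVneq (w i) 0%N; first by rewrite !mul0r.
have ai_le : a i <= \sum_j (w j)%:R * a j.
  apply: (@le_trans _ _ ((w i)%:R * a i)); first by rewrite ler_peMl // ler1n lt0n.
  by rewrite (bigD1 i) //= lerDl sumr_ge0 // => j _; rewrite mulr_ge0.
rewrite ler_wpM2l ?mulr_ge0 // ge0_ler_powR // nnegrE ?a0 //.
exact: le_trans (a0 i) ai_le.
Qed.

Lemma ge_of_powR_ge (p c v lam : R) : 2 <= p -> 0 <= c -> 0 <= v -> 0 < lam ->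
  c * v `^ ((p - 2) / p) <= lam `^ (2 / p) -> v `^ ((p - 2) / 2) * c `^ (p / 2) <= lam.
Proof.
move=> p2 c0 v0 lam0 le_root; have p0 : 0 < p by apply: lt_le_trans p2.
have -> : v `^ ((p - 2) / 2) * c `^ (p / 2) = (c * v `^ ((p - 2) / p)) `^ (p / 2).
  rewrite powRM ?powR_ge0 // -powRrM mulrC.
  by congr (_ `^ _ * _); congr (_ `^ _); field; rewrite gt_eqF.
have -> : lam = (lam `^ (2 / p)) `^ (p / 2).
  by rewrite -powRrM (_ : 2 / p * (p / 2) = 1) ?powRr1 ?ltW //; field; rewrite gt_eqF.
apply: ge0_ler_powR => //; first by rewrite divr_ge0 // ltW.
  by rewrite nnegrE mulr_ge0 ?powR_ge0.
by rewrite nnegrE powR_ge0.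
Qed.

(* Cancelling S^(1+r), with r = (p - 2) / p, the hypothesis says
   K vol^-r lam^(1+r) <= (1 - 1/N) lam^2. *)
Lemma lower_bound_of_summed_CD (p K N vol lam S : R) :
  2 <= p -> 1 < N -> 0 < K -> 0 < vol -> 0 < lam -> 0 < S ->
  K * (vol * (lam * S / vol) `^ ((2 * p - 2) / p))
    <= (1 - N^-1) * (lam ^+ 2 * (S * S `^ ((p - 2) / p))) ->
  vol^-1 `^ ((p - 2) / 2) * (N * K / (N - 1)) `^ (p / 2) <= lam.
Proof.
move=> p2 N1 K0 vol0 lam0 S0 summed.
have p0 : 0 < p by apply: lt_le_trans p2.
have N0 : 0 < N by apply: lt_trans N1.
set r := (p - 2) / p.
have powRDr (a s : R) : 0 < a -> a `^ (1 + s) = a * a `^ s.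
  by move=> a0; rewrite powRD ?powRr1 ?ltW // (gt_eqF a0) implybT.
have qE : (2 * p - 2) / p = 1 + r by rewrite /r; field; rewrite gt_eqF.
have lamE : lam ^+ 2 = lam `^ (1 + r) * lam `^ (2 / p).
  rewrite -powRD ?(gt_eqF lam0) ?implybT // -powR_mulrn ?ltW //.
  by congr (_ `^ _); rewrite /r; field; rewrite gt_eqF.
have pos : 0 < (lam * S) `^ (1 + r) by rewrite powR_gt0 ?mulr_gt0.
have lhsE : (lam * S) `^ (1 + r) * (K * vol^-1 `^ r)
    = K * (vol * (lam * S / vol) `^ ((2 * p - 2) / p)).
  rewrite qE [(lam * S / vol) `^ _]powRM ?mulr_ge0 ?invr_ge0 ?ltW //.
  rewrite [vol^-1 `^ (1 + r)]powRDr ?invr_gt0 //.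
  by field; rewrite gt_eqF.
have rhsE : (lam * S) `^ (1 + r) * ((1 - N^-1) * lam `^ (2 / p))
    = (1 - N^-1) * (lam ^+ 2 * (S * S `^ r)).
  by rewrite lamE -powRDr // powRM ?ltW //; ring.
have K_le : K * vol^-1 `^ r <= (1 - N^-1) * lam `^ (2 / p).
  by rewrite -(ler_pM2l pos) lhsE rhsE.
apply: ge_of_powR_ge => //.
- by rewrite divr_ge0 ?mulr_ge0 ?subr_ge0 ?(ltW N0) ?(ltW K0) ?(ltW N1).
- by rewrite invr_ge0 ltW.
have -> : lam `^ (2 / p) = N / (N - 1) * ((1 - N^-1) * lam `^ (2 / p)).
  by field; rewrite subr_eq0 !gt_eqF.
rewrite -/r (_ : N * K / (N - 1) * _ = N / (N - 1) * (K * vol^-1 `^ r)); last by ring.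
by rewrite ler_wpM2l // divr_ge0 ?subr_ge0 ?(ltW N0) ?(ltW N1).
Qed.

End RealInequalities.

Section Continuity.
Variable R : realType.
Local Open Scope classical_set_scope.

Lemma continuous_normr_powR (r : R) : 0 <= r -> continuous (fun t : R => `|t| `^ r).
Proof.
rewrite le_eqVlt => /predU1P[<- t|r0 t].
  by under eq_fun do rewrite powRr0; exact: cvg_cst.
have [->|t0] := eqVneq t 0.
  rewrite /continuous_at normr0 powR0 ?gt_eqF //.
  apply/cvgrPdist_lt => eps eps0.
  have root_gt0 : 0 < eps `^ r^-1 by apply: powR_gt0.
  near=> x; rewrite sub0r normrN ger0_norm ?powR_ge0 //.
  have -> : eps = (eps `^ r^-1) `^ r by rewrite -powRrM mulVf ?gt_eqF // powRr1 // ltW.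
  rewrite gt0_ltr_powR ?nnegrE ?powR_ge0 //; near: x; exact: nbhs0_lt.
have norm_cvg : `|x| @[x --> t] --> `|t| by apply: cvg_norm; exact: cvg_id.
have powR_cont : {for (`|t| : R), continuous (fun a : R => a `^ r)}.
  apply: differentiable_continuous; rewrite -derivable1_diffP.
  by apply: derivable_powR; rewrite in_itv /= andbT normr_gt0.
exact: cvg_comp norm_cvg powR_cont.
Unshelve. all: by end_near.
Qed.

Lemma cont0_sum (I : finType) (P : pred I) (G : I -> R -> R) :
  (forall i, cont0 (G i)) -> cont0 (fun e => \sum_(i | P i) G i e).
Proof. by move=> G0; apply: cvg_big => // [|i _]; [exact: add_continuous | exact: G0]. Qed.

Lemma cont0_normr_powR (r : R) (g : R -> R) :
  0 <= r -> cont0 g -> cont0 (fun e => `|g e| `^ r).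
Proof.
by move=> r0 g0; exact (cvg_comp g _ g0 (continuous_normr_powR r0 (x := g 0))).
Qed.

End Continuity.

Section SignedGraph.
Variables (R : realType) (V : finType) (adj : rel V) (sigma : V -> V -> R).

Local Notation d := (deg R adj).

Lemma deg_ge0 x : 0 <= d x.
Proof. exact: ler0n. Qed.

Lemma sum_adj_deg0 x (F : V -> R) : d x = 0 -> \sum_(y | adj x y) F y = 0.
Proof.
move/eqP; rewrite pnatr_eq0 cards_eq0 => /eqP adj_x0.
apply: big_pred0 => y; have : y \notin [set y | adj x y] by rewrite adj_x0 inE.
by rewrite inE => /negbTE.
Qed.

Lemma mul_deg_avg x (F : V -> R) :
  d x * ((d x)^-1 * \sum_(y | adj x y) F y) = \sum_(y | adj x y) F y.
Proof.
have [d0|d0] := eqVneq (d x) 0; first by rewrite (sum_adj_deg0 _ d0) !mulr0.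
by rewrite mulrA mulfV // mul1r.
Qed.

Lemma mul_deg_half_avg x (F : V -> R) :
  d x * ((2 * d x)^-1 * \sum_(y | adj x y) F y) = 2^-1 * \sum_(y | adj x y) F y.
Proof.
have [d0|d0] := eqVneq (d x) 0; first by rewrite (sum_adj_deg0 _ d0) !mulr0.
by field; rewrite d0.
Qed.

Lemma ppowE (p t : R) : ppow p t = `|t| `^ (p - 2) * t.
Proof. by rewrite /ppow; case: eqP => [->|]; rewrite ?mulr0. Qed.

Lemma ppowN (p t : R) : ppow p (- t) = - ppow p t.
Proof. by rewrite !ppowE normrN mulrN. Qed.

Lemma ppow_eq0 (p t : R) : (ppow p t == 0) = (t == 0).
Proof.
rewrite ppowE mulf_eq0 orb_idl // => /eqP/powR_eq0_eq0/eqP.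
by rewrite normr_eq0.
Qed.

Lemma mul_ppow (p t : R) : p != 0 -> t * ppow p t = `|t| `^ p.
Proof.
move=> p0; have [->|t0] := eqVneq t 0; first by rewrite mul0r normr0 powR0.
rewrite ppowE mulrCA -expr2 -real_normK ?num_real // -powR_mulrn // -powRD.
  by congr (_ `^ _); ring.
by rewrite normr_eq0 t0 implybT.
Qed.

Lemma sqr_ppow (p t : R) : p != 0 -> ppow p t ^+ 2 = `|t| `^ p * `|t| `^ (p - 2).
Proof. by move=> p0; rewrite expr2 {1}ppowE -mulrA mul_ppow // mulrC. Qed.

Lemma Gam_ge0 p f x : 0 <= Gam adj sigma p f f x.
Proof.
rewrite /Gam mulr_ge0 ?invr_ge0 ?mulr_ge0 ?deg_ge0 //.
by apply: sumr_ge0 => y _; rewrite ppowE -mulrA mulr_ge0 ?powR_ge0 // -expr2 sqr_ge0.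
Qed.

Hypotheses (adj_irr : irreflexive adj) (adj_sym : symmetric adj)
  (sigmaP : signature adj sigma).

Lemma sdiff_swap f x y : adj x y -> sdiff sigma f y x = - sigma x y * sdiff sigma f x y.
Proof. by move/sigmaP => [sym [s1|s1]]; rewrite /sdiff -sym s1; ring. Qed.

Lemma normr_sdiff_swap f x y : adj x y -> `|sdiff sigma f y x| = `|sdiff sigma f x y|.
Proof.
move=> xy; rewrite sdiff_swap // normrM normrN.
by have [_ [->|->]] := sigmaP xy; rewrite ?normrN normr1 mul1r.
Qed.

Lemma sum_adj_swap (F : V -> V -> R) :
  \sum_x \sum_(y | adj x y) F x y = \sum_x \sum_(y | adj x y) F y x.
Proof.
rewrite (exchange_big_dep xpredT) //=; apply: eq_bigr => y _.
by apply: eq_bigl => x; rewrite adj_sym.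
Qed.

Lemma sum_adj_antisym (F : V -> V -> R) : (forall x y, adj x y -> F y x = - F x y) ->
  \sum_x \sum_(y | adj x y) F x y = 0.
Proof.
move=> Fanti; have := sum_adj_swap F.
rewrite [RHS](eq_bigr (fun x => - \sum_(y | adj x y) F x y)) => [|x _].
  by rewrite sumrN; lra.
by rewrite -sumrN; apply: eq_bigr => y xy; rewrite Fanti.
Qed.

Lemma sum_deg_Lpf p f phi : \sum_x d x * Lpf adj sigma p f phi x = 0.
Proof.
rewrite /Lpf; under eq_bigr do rewrite mul_deg_avg.
by apply: sum_adj_antisym => x y xy; rewrite normr_sdiff_swap //; ring.
Qed.

Lemma sum_deg_Gam p f g : \sum_x d x * Gam adj sigma p f g x
   = - \sum_x g x * (d x * plap adj sigma p f x).
Proof.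
rewrite /Gam /plap; under eq_bigr do rewrite mul_deg_half_avg.
under [in RHS]eq_bigr do rewrite mul_deg_avg mulr_sumr.
rewrite -mulr_sumr.
have flux : \sum_x \sum_(y | adj x y) ppow p (sdiff sigma f x y) * (sigma x y * g y)
   = - \sum_x \sum_(y | adj x y) g x * ppow p (sdiff sigma f x y).
  rewrite sum_adj_swap -sumrN; apply: eq_bigr => x _; rewrite -sumrN.
  apply: eq_bigr => y xy; rewrite sdiff_swap //.
  by have [sym [s1|s1]] := sigmaP xy; rewrite -sym s1 ?opprK ?mulN1r ?mul1r ?ppowN; ring.
have -> : \sum_x \sum_(y | adj x y) ppow p (sdiff sigma f x y) * sdiff sigma g x y
   = \sum_x \sum_(y | adj x y) ppow p (sdiff sigma f x y) * (sigma x y * g y)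
     - \sum_x \sum_(y | adj x y) g x * ppow p (sdiff sigma f x y).
  rewrite -sumrB; apply: eq_bigr => x _; rewrite -sumrB; apply: eq_bigr => y _.
  by rewrite /sdiff; ring.
by rewrite flux; field.
Qed.

Lemma sum_deg_Gam2 p f :
  \sum_x d x * Gam2 adj sigma p f x = \sum_x d x * plap adj sigma p f x ^+ 2.
Proof.
transitivity (2^-1 * \sum_x d x * Lpf adj sigma p f (Gam adj sigma p f f) x
    - \sum_x d x * Gam adj sigma p f (plap adj sigma p f) x).
  by rewrite mulr_sumr -sumrB; apply: eq_bigr => x _; rewrite /Gam2; ring.
rewrite sum_deg_Lpf sum_deg_Gam mulr0 sub0r opprK.
by apply: eq_bigr => x _; ring.
Qed.

Lemma sum_deg_powR_le (p : R) (f : V -> R) : 2 <= p ->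
  \sum_x d x * (`|f x| `^ p * `|f x| `^ (p - 2))
    <= (\sum_x d x * `|f x| `^ p) * (\sum_x d x * `|f x| `^ p) `^ ((p - 2) / p).
Proof.
move=> p2; have p0 : p != 0 by rewrite gt_eqF // (lt_le_trans _ p2).
have r_ge0 : 0 <= (p - 2) / p by rewrite divr_ge0 ?subr_ge0 // (le_trans _ p2).
have powE x : `|f x| `^ (p - 2) = (`|f x| `^ p) `^ ((p - 2) / p).
  by rewrite -powRrM mulrC divfK.
under eq_bigr do rewrite powE.
exact (sum_powR_le_powR_sum (fun x => #|[set y | adj x y]|) r_ge0 (fun x => powR_ge0 _ _)).
Qed.

Definition CD_ineq (p K N : R) (f : V -> R) (x : V) : Prop :=
  N^-1 * (plap adj sigma p f x) ^+ 2 + K * (Gam adj sigma p f f x) `^ ((2 * p - 2) / p)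
    <= Gam2 adj sigma p f x.

Section Perturbation.
Local Open Scope classical_set_scope.

Lemma cont0_sdiff (Psi : R -> V -> R) x y :
  (forall z, cont0 (Psi ^~ z)) -> cont0 (fun e => sdiff sigma (Psi e) x y).
Proof.
by move=> Psi0; apply: cvgB; [apply: cvgM; [exact: cvg_cst | exact: Psi0] | exact: Psi0].
Qed.

Variable p : R.
Hypothesis p_ge2 : 2 <= p.

Lemma cont0_ppow (g : R -> R) : cont0 g -> cont0 (fun e => ppow p (g e)).
Proof.
move=> g0; rewrite /continuous_at.
rewrite (_ : (fun e => _) = fun e => `|g e| `^ (p - 2) * g e); last first.
  by apply/funext => e; rewrite ppowE.
have p2_ge0 : 0 <= p - 2 by rewrite subr_ge0.
by rewrite ppowE; exact (cvgM (cont0_normr_powR p2_ge0 g0) g0).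
Qed.

Section Family.
Variable Phi : R -> V -> R.
Hypothesis Phi0 : forall z, cont0 (Phi ^~ z).

Lemma cont0_plap x : cont0 (fun e => plap adj sigma p (Phi e) x).
Proof.
apply: cvgM; first exact: cvg_cst.
by apply: cont0_sum => y; apply: cont0_ppow; apply: cont0_sdiff.
Qed.

Lemma cont0_Gam (Psi : R -> V -> R) x : (forall z, cont0 (Psi ^~ z)) ->
  cont0 (fun e => Gam adj sigma p (Phi e) (Psi e) x).
Proof.
move=> Psi0; apply: cvgM; first exact: cvg_cst.
by apply: cont0_sum => y; apply: cvgM; [apply: cont0_ppow |]; apply: cont0_sdiff.
Qed.

Lemma cont0_Lpf (Psi : R -> V -> R) x : (forall z, cont0 (Psi ^~ z)) ->
  cont0 (fun e => Lpf adj sigma p (Phi e) (Psi e) x).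
Proof.
move=> Psi0; apply: cvgM; first exact: cvg_cst.
apply: cont0_sum => y; apply: cvgM; last exact: cvgB (Psi0 y) (Psi0 x).
have p2_ge0 : 0 <= p - 2 by rewrite subr_ge0.
exact (cont0_normr_powR p2_ge0 (cont0_sdiff Phi0)).
Qed.

Lemma cont0_Gam2 x : cont0 (fun e => Gam2 adj sigma p (Phi e) x).
Proof.
apply: cvgB; last by apply: cont0_Gam; apply: cont0_plap.
by apply: cvgM; [exact: cvg_cst | apply: cont0_Lpf => z; apply: cont0_Gam].
Qed.

End Family.

(* Raising f at x by a small e > 0 makes every difference at x nonzero, so CD_p applies;
   the inequality then passes to the limit e -> 0+. *)
Lemma CD_ineq_of_CDp (K N : R) : CDp adj sigma p K N ->
  forall f x, CD_ineq p K N f x.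
Proof.
move=> CD f x; set q := (2 * p - 2) / p.
have q_ge0 : 0 <= q by apply: divr_ge0; move: p_ge2; lra.
pose Phi e z := f z + e * (z == x)%:R.
have Phi0 z : cont0 (Phi ^~ z).
  by apply: cvgD; [exact: cvg_cst | apply: cvgM; [exact: cvg_id | exact: cvg_cst]].
have sdiff_Phi e y : adj x y -> sdiff sigma (Phi e) x y = sdiff sigma f x y - e.
  move=> xy; have yx : (y == x) = false by apply: contraTF xy => /eqP ->; rewrite adj_irr.
  by rewrite /sdiff /Phi yx eqxx mulr0 addr0 mulr1 opprD addrA.
pose h e := Gam2 adj sigma p (Phi e) x - (N^-1 * plap adj sigma p (Phi e) x ^+ 2
  + K * `|Gam adj sigma p (Phi e) (Phi e) x| `^ q).
have h0 : cont0 h.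
  apply: cvgB; first exact: cont0_Gam2.
  apply: cvgD; apply: cvgM; try exact: cvg_cst.
    by apply: cvgM; apply: cont0_plap.
  exact (cont0_normr_powR q_ge0 (cont0_Gam Phi0 Phi0)).
have h_ge0 : \forall e \near 0^'+, 0 <= h e.
  have off_diffs : \forall e \near 0^'+, forall y, adj x y -> sdiff sigma f x y != e.
    apply: filter_forall => y; have [pos|npos] := ltP 0 (sdiff sigma f x y).
      by near=> e => _; rewrite gt_eqF //; near: e; exact: nbhs_right_lt.
    by near=> e => _; rewrite lt_eqF // (le_lt_trans npos) //; near: e; exact: nbhs_right_gt.
  apply: filterS off_diffs => e off; rewrite /h subr_ge0 ger0_norm ?Gam_ge0 //.
  by apply: CD => y xy; rewrite sdiff_Phi // subr_eq0 off.
have Phi_0 : Phi 0 = f by apply/funext => z; rewrite /Phi mul0r addr0.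
have := cvgr_to_ge (FF := at_right_proper_filter 0) (cvg_at_right_filter h0) h_ge0.
by rewrite /h Phi_0 subr_ge0 ger0_norm ?Gam_ge0.
Unshelve. all: by end_near.
Qed.

End Perturbation.

Lemma sum_deg_CD_ineq p K N f : (forall x, CD_ineq p K N f x) ->
  K * \sum_x d x * Gam adj sigma p f f x `^ ((2 * p - 2) / p)
    <= (1 - N^-1) * \sum_x d x * plap adj sigma p f x ^+ 2.
Proof.
move=> CD.
have summed : \sum_x d x * (N^-1 * plap adj sigma p f x ^+ 2
      + K * Gam adj sigma p f f x `^ ((2 * p - 2) / p))
    <= \sum_x d x * Gam2 adj sigma p f x.
  by apply: ler_sum => x _; rewrite ler_wpM2l ?deg_ge0 //; exact: CD.
have splitE : \sum_x d x * (N^-1 * plap adj sigma p f x ^+ 2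
      + K * Gam adj sigma p f f x `^ ((2 * p - 2) / p))
    = N^-1 * \sum_x d x * plap adj sigma p f x ^+ 2
      + K * \sum_x d x * Gam adj sigma p f f x `^ ((2 * p - 2) / p).
  by rewrite !mulr_sumr -big_split; apply: eq_bigr => x _ /=; ring.
rewrite splitE sum_deg_Gam2 in summed; lra.
Qed.

Section Eigenfunction.
Variables (p lam : R) (f : V -> R).
Hypotheses (p_neq0 : p != 0)
  (f_eigen : forall x, - plap adj sigma p f x = lam * ppow p (f x)).

Let plapE x : plap adj sigma p f x = - (lam * ppow p (f x)).
Proof. by rewrite -f_eigen opprK. Qed.

Lemma eigen_sum_deg_Gam :
  \sum_x d x * Gam adj sigma p f f x = lam * \sum_x d x * `|f x| `^ p.
Proof.
rewrite sum_deg_Gam // mulr_sumr -sumrN; apply: eq_bigr => x _.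
by rewrite plapE -mul_ppow //; ring.
Qed.

Lemma eigen_sum_deg_sqr_plap :
  \sum_x d x * plap adj sigma p f x ^+ 2
    = lam ^+ 2 * \sum_x d x * (`|f x| `^ p * `|f x| `^ (p - 2)).
Proof.
rewrite mulr_sumr; apply: eq_bigr => x _.
by rewrite plapE sqrrN exprMn sqr_ppow //; ring.
Qed.

Lemma eigen_deg_gt0 x : lam != 0 -> f x != 0 -> 0 < d x.
Proof.
move=> lam0 fx0; rewrite lt_def deg_ge0 andbT; apply/eqP => dx0.
have := plapE x; rewrite /plap (sum_adj_deg0 _ dx0) mulr0 => /esym/eqP.
by rewrite oppr_eq0 mulf_eq0 (negbTE lam0) ppow_eq0 (negbTE fx0).
Qed.

Lemma eigen_sum_deg_normr_powR_gt0 x : lam != 0 -> f x != 0 ->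
  0 < \sum_y d y * `|f y| `^ p.
Proof.
move=> lam0 fx0; rewrite (bigD1 x) //= ltr_pwDl ?mulr_gt0 ?powR_gt0 ?normr_gt0 //.
  exact: eigen_deg_gt0.
by apply: sumr_ge0 => y _; rewrite mulr_ge0 ?deg_ge0 ?powR_ge0.
Qed.

Lemma eigenvalue_gt0 x : lam != 0 -> f x != 0 -> 0 < lam.
Proof.
move=> lam0 fx0; have S_gt0 := eigen_sum_deg_normr_powR_gt0 lam0 fx0.
rewrite lt_def lam0 -(pmulr_lge0 _ S_gt0) -eigen_sum_deg_Gam.
by apply: sumr_ge0 => y _; rewrite mulr_ge0 ?deg_ge0 ?Gam_ge0.
Qed.

End Eigenfunction.

Lemma vol_gt0 x : 0 < d x -> 0 < vol R adj.
Proof.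
by move=> dx0; rewrite /vol (bigD1 x) //= ltr_pwDl // sumr_ge0.
Qed.

Lemma eigenvalue_ge_of_CD_ineq (p K N lam : R) (f : V -> R) :
  2 <= p -> 1 < N -> 0 < K -> (forall x, CD_ineq p K N f x) ->
  (exists x, f x != 0) -> (forall x, - plap adj sigma p f x = lam * ppow p (f x)) ->
  lam != 0 ->
  (vol R adj)^-1 `^ ((p - 2) / 2) * (N * K / (N - 1)) `^ (p / 2) <= lam.
Proof.
move=> p2 N1 K0 CD [x0 fx0] f_eigen lam0.
have p_gt0 : 0 < p by apply: lt_le_trans p2.
have p0 := lt0r_neq0 p_gt0.
have S_gt0 := eigen_sum_deg_normr_powR_gt0 f_eigen lam0 fx0.
have vol_gt0 := vol_gt0 (eigen_deg_gt0 f_eigen lam0 fx0).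
have lam_gt0 := eigenvalue_gt0 p0 f_eigen lam0 fx0.
apply: (lower_bound_of_summed_CD p2 N1 K0 vol_gt0 lam_gt0 S_gt0).
have q_ge1 : 1 <= (2 * p - 2) / p by rewrite ler_pdivlMr // mul1r; lra.
have jensen := powR_mean_le q_ge1 deg_ge0 (Gam_ge0 p f) vol_gt0.
rewrite -/(vol R adj) (eigen_sum_deg_Gam p0 f_eigen) in jensen.
apply: le_trans (ler_wpM2l (ltW K0) jensen) _.
apply: le_trans (sum_deg_CD_ineq CD) _.
rewrite (eigen_sum_deg_sqr_plap p0 f_eigen) ler_wpM2l ?ler_wpM2l ?sqr_ge0 ?sum_deg_powR_le //.
by rewrite subr_ge0 invf_le1 ?ltW // (lt_trans ltr01).
Qed.

End SignedGraph.

Unset Implicit Arguments.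

Theorem theorem4p10 (R : realType) (V : finType) (adj : rel V)
    (sigma : V -> V -> R) (p K N : R) :
  simple_connected_graph adj -> signature adj sigma ->
  2 <= p -> 1 < N -> 0 < K ->
  CDp adj sigma p K N ->
  forall lam : R, is_eigenvalue adj sigma p lam -> lam != 0 ->
    (vol R adj)^-1 `^ ((p - 2) / 2) * (N * K / (N - 1)) `^ (p / 2) <= lam.
Proof.
move=> [adj_sym [adj_irr _]] sigmaP p2 N1 K0 CD lam [f [f_nz f_eigen]] lam0.
apply: (eigenvalue_ge_of_CD_ineq adj_sym sigmaP p2 N1 K0 _ f_nz f_eigen lam0).
exact (CD_ineq_of_CDp adj_irr p2 CD f).
Qed.
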